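(* Let $S$ be a signal of a mixed signaling scheme such that the set $\{w_1(j): j\in S\}$ consists of a single bidder. Then $S$ is singleton-splittable, i.e. $\sum_{j\in S}\varphi_{j,S}\,\mathrm{rev}(j)\ge\mathrm{rev}(S)$.
   Context: Setting: $n\ge 2$ bidders, $m$ item types with probabilities $p_j$, nonnegative valuations $v_{i,j}$; $\psi_{i,j}=p_jv_{i,j}$. A mixed signaling scheme is a finite signal set $\mathcal{S}$ and $\varphi:[m]\times\mathcal{S}\to[0,1]$ with $\sum_S\varphi(j,S)=1$ for each $j$; $\varphi_{j,S}=\varphi(j,S)$; $j\in S$ means $\varphi_{j,S}>0$. Ties are broken by a fixed priority order on bidders. $w_1(S)$ is the bidder maximizing $\sum_j\psi_{i,j}\varphi_{j,S}$ and $w_2(S)$ the maximizer among $i\ne w_1(S)$; $\mathrm{rev}(S)=\sum_j\varphi_{j,S}\psi_{w_2(S),j}$. For a type $j$, $w_1(j)$ is the bidder maximizing $\psi_{i,j}$ and $\mathrm{rev}(j)=\mathrm{max2}_i\psi_{i,j}$ (second-largest entry with multiplicity). *)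

From mathcomp Require Import all_boot all_order all_algebra.
Set Implicit Arguments. Unset Strict Implicit. Unset Printing Implicit Defensive.
Import Order.TTheory GRing.Theory Num.Theory.
Local Open Scope ring_scope.

Section Auction.
Variables (R : realFieldType) (Bidder : finType) (rank : Bidder -> nat).
(* rank = fixed priority order on bidders: smaller rank = higher priority
   (rank is assumed injective in the theorem). *)

Definition beats (f : Bidder -> R) (i k : Bidder) : bool :=
  (f k < f i) || ((f k == f i) && (rank i < rank k)%N).

Definition is_w1 (f : Bidder -> R) (i : Bidder) : Prop :=
  forall k, k != i -> beats f i k.

Definition is_w2 (f : Bidder -> R) (i : Bidder) : Prop :=
  exists2 w, is_w1 f w & (i != w /\ forall k, k != i -> k != w -> beats f i k).

(* second-largest entry of f, counted with multiplicity *)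
Definition max2 (f : Bidder -> R) : R :=
  nth 0 (sort (fun x y : R => y <= x) [seq f i | i <- enum Bidder]) 1.
End Auction.

Section Scheme.
Variables (R : realFieldType) (Bidder Item Sig : finType).
Variables (p : Item -> R) (v : Bidder -> Item -> R) (phi : Item -> Sig -> R).

Definition psi (i : Bidder) (j : Item) : R := p j * v i j.

Definition is_scheme : Prop :=
  (forall j S, 0 <= phi j S <= 1) /\ (forall j, \sum_(S : Sig) phi j S = 1).

Definition in_sig (j : Item) (S : Sig) : bool := 0 < phi j S.

(* expected value of bidder i conditioned (unnormalized) on signal S *)
Definition sig_score (S : Sig) (i : Bidder) : R := \sum_(j : Item) psi i j * phi j S.

(* revenue of S given its second-highest bidder w2 *)
Definition rev_sig_at (S : Sig) (w2 : Bidder) : R := \sum_(j : Item) phi j S * psi w2 j.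

Definition rev_item (j : Item) : R := max2 (fun i => psi i j).
End Scheme.

From mathcomp Require Import all_boot all_order all_algebra.
Import Order.TTheory GRing.Theory Num.Theory.
Set Implicit Arguments. Unset Strict Implicit. Unset Printing Implicit Defensive.
Local Open Scope ring_scope.

(* The common item winner b weakly dominates every bidder on each item of S,
   hence also on S itself.  So the second bidder w2 of S is not b: a tie with
   b on S would force ties on every item of S, and then the priority order
   would have to favour both b and the winner of S over each other.  Being
   different from b, w2 bids at most max2 on every item of S, and averaging
   over S with the weights phi gives the claim. *)

Section SecondLargest.
Variable R : realFieldType.

Lemma sorted_count_gt_nth1 (s : seq R) :
  sorted (fun x y : R => y <= x) s -> (count (fun x => (nth 0 s 1 < x)%R) s <= 1)%N.
Proof.
case: s => [|x0 [|x1 t]] //=; first by rewrite addn0 leq_b1.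
case/andP=> _ sorted_t.
have t_le_x1 : all (fun y => y <= x1) t.
  by apply: order_path_min sorted_t => x y z yx zy; apply: le_trans zy yx.
have -> : count (fun x => x1 < x) t = 0%N.
  apply/eqP; rewrite -leqn0 leqNgt -has_count; apply/hasPn => y /(allP t_le_x1).
  by rewrite leNgt.
by rewrite ltxx add0n addn0 leq_b1.
Qed.

Lemma max2_ge_min (T : finType) (f : T -> R) (b k : T) :
  k != b -> Num.min (f k) (f b) <= max2 f.
Proof.
move=> kb; rewrite /max2; set s := sort _ _.
rewrite leNgt; apply/negP; rewrite lt_min => /andP[ltk ltb].
have sorted_s : sorted (fun x y : R => y <= x) s.
  by apply: sort_sorted => x y; rewrite orbC le_total.
have perm_s : perm_eq s [seq f i | i <- enum T] by rewrite perm_sort.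
have := sorted_count_gt_nth1 sorted_s; apply/negP; rewrite -ltnNge.
rewrite (permP perm_s) count_map -size_filter.
have /card_uniqP <- : uniq (filter (fun i => max2 f < f i) (enum T)).
  by rewrite filter_uniq ?enum_uniq.
have -> : 2%N = #|[set b; k]| by rewrite cards2 eq_sym kb.
apply: subset_leq_card; apply/subsetP => i; rewrite !inE mem_filter mem_enum andbT.
by case/orP=> /eqP->.
Qed.

End SecondLargest.

Section PriorityWinner.
Variables (R : realFieldType) (Bidder : finType) (rank : Bidder -> nat).
Variables (f : Bidder -> R) (b : Bidder).
Hypothesis b_w1 : is_w1 rank f b.

Lemma is_w1_ge (i : Bidder) : f i <= f b.
Proof.
have [-> // | ib] := eqVneq i b.
by case/orP: (b_w1 ib) => [/ltW // | /andP[/eqP-> _]].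
Qed.

Lemma is_w1_tie_rank (k : Bidder) : k != b -> f k = f b -> (rank b < rank k)%N.
Proof. by move=> kb fkb; case/orP: (b_w1 kb); rewrite fkb ?ltxx // eqxx. Qed.

End PriorityWinner.

Section Signal.
Variables (R : realFieldType) (Bidder Item Sig : finType).
Variables (p : Item -> R) (v : Bidder -> Item -> R) (phi : Item -> Sig -> R).
Variable S : Sig.
Hypothesis phi_ge0 : forall j, 0 <= phi j S.

Local Notation psi := (psi p v).
Local Notation in_S j := (in_sig phi j S).

Lemma phi_notin_sig (j : Item) : ~~ in_S j -> phi j S = 0.
Proof. by rewrite /in_sig lt_def phi_ge0 andbT negbK => /eqP. Qed.

Section Domination.
Variables i b : Bidder.
Hypothesis dom : forall j, in_S j -> psi i j <= psi b j.

Lemma psi_phi_le (j : Item) : psi i j * phi j S <= psi b j * phi j S.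
Proof.
have [jS | jS] := boolP (in_S j); first by rewrite ler_wpM2r ?dom.
by rewrite phi_notin_sig // !mulr0.
Qed.

Lemma sig_score_le : sig_score p v phi S i <= sig_score p v phi S b.
Proof. exact: ler_sum (fun j _ => psi_phi_le j). Qed.

Lemma sig_score_eq_psi :
  sig_score p v phi S i = sig_score p v phi S b -> forall j, in_S j -> psi i j = psi b j.
Proof.
move=> score_eq j jS.
have gap0 : \sum_l (psi b l * phi l S - psi i l * phi l S) = 0.
  by rewrite sumrB; apply/eqP; rewrite subr_eq0 eq_sym; apply/eqP.
have gap_ge0 l : true -> 0 <= psi b l * phi l S - psi i l * phi l S.
  by rewrite subr_ge0 psi_phi_le.
move/eqP: (psumr_eq0P gap_ge0 gap0 (i := j) isT); rewrite subr_eq0 eq_sym => /eqP.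
by apply: mulIf; rewrite gt_eqF.
Qed.

End Domination.

Section ItemWinner.
Variables (rank : Bidder -> nat) (b : Bidder).
Hypothesis b_w1_items : forall j, in_S j -> is_w1 rank (fun i => psi i j) b.

Lemma psi_le_item_winner (i : Bidder) (j : Item) : in_S j -> psi i j <= psi b j.
Proof. by move=> jS; apply: (is_w1_ge (b_w1_items jS)). Qed.

Lemma is_w2_neq_item_winner (w2 : Bidder) :
  (exists j, in_S j) -> is_w2 rank (sig_score p v phi S) w2 -> w2 != b.
Proof.
move=> [j0 j0S] [w w_w1 [w2w _]]; apply/eqP => w2b; move: w2w; rewrite w2b => bw.
have score_eq : sig_score p v phi S w = sig_score p v phi S b.
  apply/le_anti; rewrite (is_w1_ge w_w1) andbT.
  by apply: sig_score_le => j; apply: psi_le_item_winner.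
have wb : w != b by rewrite eq_sym bw.
have rank_wb := is_w1_tie_rank w_w1 bw (esym score_eq).
have psi_eq := sig_score_eq_psi (fun j => psi_le_item_winner w (j := j)) score_eq j0S.
have rank_bw := is_w1_tie_rank (b_w1_items j0S) wb psi_eq.
by have := ltn_trans rank_wb rank_bw; rewrite ltnn.
Qed.

Lemma rev_sig_le_sum_rev_item (w2 : Bidder) :
  w2 != b -> rev_sig_at p v phi S w2 <= \sum_(j | in_S j) phi j S * rev_item p v j.
Proof.
move=> w2b; rewrite big_mkcond; apply: ler_sum => j _.
have [jS | jS] := ifPn; last by rewrite phi_notin_sig // mul0r.
rewrite ler_wpM2l // /rev_item; apply: le_trans (max2_ge_min _ w2b).
by rewrite le_min lexx psi_le_item_winner.
Qed.

End ItemWinner.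
End Signal.

Theorem corollary1 (R : realFieldType) (Bidder Item Sig : finType)
  (rank : Bidder -> nat) (p : Item -> R) (v : Bidder -> Item -> R)
  (phi : Item -> Sig -> R) (S : Sig) :
  (2 <= #|Bidder|)%N ->
  injective rank ->
  (forall j, 0 <= p j) -> \sum_(j : Item) p j = 1 ->
  (forall i j, 0 <= v i j) ->
  is_scheme phi ->
  (exists b : Bidder,
      (exists j, in_sig phi j S) /\
      forall j, in_sig phi j S -> is_w1 rank (fun i => psi p v i j) b) ->
  forall w2 : Bidder, is_w2 rank (sig_score p v phi S) w2 ->
  \sum_(j : Item | in_sig phi j S) phi j S * rev_item p v j
    >= rev_sig_at p v phi S w2.
Proof.
move=> _ _ _ _ _ [phi_01 _] [b [S_nonempty b_w1_items]] w2 w2_w2.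
have phi_ge0 j : 0 <= phi j S by case/andP: (phi_01 j S).
have w2b := is_w2_neq_item_winner phi_ge0 b_w1_items S_nonempty w2_w2.
exact (rev_sig_le_sum_rev_item phi_ge0 b_w1_items w2b).
Qed.
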